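(* In the setting described in the context, if $\tau$ is the random slot allocation, then $\mathbb E\left[\sum_{k\in U}f_\tau(k)w_k\right]\ge(1-e^{-\delta})R$, where $R$ is the maximum total reward of a feasible service placement.
   Context: An SPSC instance: finite sets $S$ (services), $V$ (nodes), $U$ (users); sizes $s_i>0$; capacities $c_j>0$; for each user $k$ a service $i_k\in S$, a set $T_k\subseteq V$, a reward $w_k>0$. A service placement $X=\{X_i\subseteq V:i\in S\}$ is feasible iff $\sum_is_i\mathbf 1[j\in X_i]\le c_j$ for all $j$; its total reward is $\sum_kw_k\mathbf 1[T_k\cap X_{i_k}\ne\emptyset]$. Let $\{x_{ij}\},\{y_k\}$ be an optimal solution of the LP with nonnegative variables: maximize $\sum_ky_kw_k$ s.t. $y_k\le\sum_{j\in T_k}x_{i_kj}$, $y_k\le1$; $\sum_ix_{ij}s_i\le c_j$; $x_{ij}=0$ if $s_i>c_j$; $0\le x_{ij}\le1$. Fix $\beta<1$ with $\max_is_i\le\beta\min_jc_j$; $\gamma:=1-\sqrt\beta$, $\delta:=(1-\sqrt\beta)^2$, $\mathbb N=\{1,2,\dots\}$. For $j\in V,q\in\mathbb N$: $P_j^q:=\{i:\gamma^qc_j\beta<s_i\le\gamma^{q-1}c_j\beta\}$, $d_j^q:=\sum_{i\in P_j^q}x_{ij}$, $v_j:=\delta c_j/\sum_is_ix_{ij}$, $n_j^q:=\lceil v_jd_j^q\rceil$. Slot set $\Lambda$: for every $j,q$ with $P_j^q\ne\emptyset$, $n_j^q$ slots $\sigma$ with node $\nu(\sigma)=j$, class $\kappa(\sigma)=q$.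 A slot allocation is $\tau:\Lambda\to S$ with $\tau(\sigma)\in P^{\kappa(\sigma)}_{\nu(\sigma)}$; $X^\tau_i:=\{j:\exists\sigma,\nu(\sigma)=j,\tau(\sigma)=i\}$; $f_\tau(k):=\mathbf 1[T_k\cap X^\tau_{i_k}\ne\emptyset]$. The random slot allocation: for each slot $\sigma$ independently, $\tau(\sigma)=i$ with probability $x_{i\nu(\sigma)}/d^{\kappa(\sigma)}_{\nu(\sigma)}$ for $i\in P^{\kappa(\sigma)}_{\nu(\sigma)}$. *)

From HB Require Import structures.
From mathcomp Require Import all_boot all_order all_algebra.
From mathcomp Require Import boolp reals sequences exp.
From mathcomp Require classical_sets.
Set Implicit Arguments. Unset Strict Implicit. Unset Printing Implicit Defensive.
Import Order.TTheory GRing.Theory Num.Theory.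
Local Open Scope ring_scope.

Section SPSC.
Variables (R : realType) (S V U : finType).
Variables (s : S -> R) (c : V -> R) (ik : U -> S) (T : U -> {set V}) (w : U -> R).

Definition feasible_placement (X : {ffun S -> {set V}}) : bool :=
  [forall j : V, \sum_(i : S) s i * (j \in X i)%:R <= c j].

Definition placement_reward (X : {ffun S -> {set V}}) : R :=
  \sum_(k : U) w k * (T k :&: X (ik k) != set0)%:R.

(* R = maximum total reward of a feasible placement (empty placement is feasible) *)
Definition opt_reward : R :=
  \big[Num.max/0]_(X : {ffun S -> {set V}} | feasible_placement X) placement_reward X.

Definition lp_feasible (x : S -> V -> R) (y : U -> R) : Prop :=
  (forall i j, 0 <= x i j <= 1) /\
  (forall k, 0 <= y k) /\
  (forall k, y k <= \sum_(j in T k) x (ik k) j) /\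
  (forall k, y k <= 1) /\
  (forall j, \sum_(i : S) x i j * s i <= c j) /\
  (forall i j, c j < s i -> x i j = 0).

Definition lp_obj (y : U -> R) : R := \sum_(k : U) y k * w k.

Definition lp_optimal (x : S -> V -> R) (y : U -> R) : Prop :=
  lp_feasible x y /\ forall x' y', lp_feasible x' y' -> lp_obj y' <= lp_obj y.

Variables (x : S -> V -> R) (beta : R).

Definition gamma : R := 1 - Num.sqrt beta.
Definition delta : R := (1 - Num.sqrt beta) ^+ 2.

(* P_j^q (used for q >= 1) *)
Definition Pcls (j : V) (q : nat) (i : S) : bool :=
  (gamma ^+ q * c j * beta < s i) && (s i <= gamma ^+ q.-1 * c j * beta).

Definition dcls (j : V) (q : nat) : R := \sum_(i : S | Pcls j q i) x i j.

Definition vnode (j : V) : R := delta * c j / \sum_(i : S) s i * x i j.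

Definition ncls (j : V) (q : nat) : nat := absz (Num.ceil (vnode j * dcls j q)).

(* a bound on all classes q >= 1 with P_j^q nonempty (exists since s_i > 0) *)
Definition qbound : nat :=
  classical_sets.xget 0%N (fun M : nat => forall j q i, (1 <= q)%N -> Pcls j q i -> (q <= M)%N).

(* the slot set Lambda: for each j and each q >= 1 with P_j^q nonempty,
   n_j^q slots labelled (j, q) = (node, class) *)
Definition slot_list : seq (V * nat) :=
  flatten [seq flatten [seq nseq (ncls j q) (j, q)
                       | q <- iota 1 qbound & [exists i, Pcls j q i]]
          | j <- enum V].

Definition nslots : nat := size slot_list.
Definition slot_label (sg : 'I_nslots) : V * nat := tnth (in_tuple slot_list) sg.
Definition nu (sg : 'I_nslots) : V := (slot_label sg).1.
Definition kappa (sg : 'I_nslots) : nat := (slot_label sg).2.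

Definition slot_alloc := {ffun 'I_nslots -> S}.

(* f_tau(k) = 1[T_k meets X^tau_{i_k}] *)
Definition served (tau : slot_alloc) (k : U) : bool :=
  [exists sg : 'I_nslots, (nu sg \in T k) && (tau sg == ik k)].

(* random slot allocation: independent slots, tau(sg) = i w.p. x_{i nu}/d_nu^kappa *)
Definition slot_prob (sg : 'I_nslots) (i : S) : R :=
  if Pcls (nu sg) (kappa sg) i then x i (nu sg) / dcls (nu sg) (kappa sg) else 0.

Definition alloc_prob (tau : slot_alloc) : R := \prod_(sg : 'I_nslots) slot_prob sg (tau sg).

Definition expected_reward : R :=
  \sum_(tau : slot_alloc) alloc_prob tau * \sum_(k : U) (served tau k)%:R * w k.

End SPSC.

From HB Require Import structures.
From mathcomp Require Import all_boot all_order all_algebra.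
From mathcomp Require Import boolp reals sequences exp.
From mathcomp Require classical_sets.
From mathcomp Require Import interval_inference convex normedtype.
From mathcomp Require Import lra.
Set Implicit Arguments. Unset Strict Implicit. Unset Printing Implicit Defensive.
Import Order.TTheory GRing.Theory Num.Theory numFieldNormedType.Exports.
Local Open Scope ring_scope.

(* User k is missed only if no slot at a node of T_k draws i_k.  The slots
   are independent, so this has probability prod_sg (1 - a_sg) <= exp (- sum_sg a_sg),
   where a_sg is the chance that slot sg sits in T_k and draws i_k.  At a node j,
   i_k lies in some class q, which has n_j^q >= v_j d_j^q slots each
   drawing i_k with probability x_{i_k j} / d_j^q, and v_j >= delta by the
   capacity constraint; hence sum_sg a_sg >= delta sum_{j in T_k} x_{i_k j}
   >= delta y_k.  Concavity of t |-> 1 - exp (- t) turns this into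
   Pr[k served] >= (1 - exp (- delta)) y_k, and summing with weights w_k
   gives (1 - exp (- delta)) times the LP value, which dominates the
   optimum since every feasible placement is an integral LP solution. *)

Lemma exprn_lt_eventually (R : realType) (g e : R) :
  `|g| < 1 -> 0 < e -> exists n, g ^+ n < e.
Proof.
move=> g_lt1 e_gt0; have [N _ gN] := cvgr0_norm_lt _ (cvg_expr g_lt1) _ e_gt0.
by exists N; apply: le_lt_trans (ler_norm _) (gN N (leqnn N)).
Qed.

Lemma oneBexpRN_concave (R : realType) (t a : R) : 0 <= t <= 1 ->
  t * (1 - expR (- a)) <= 1 - expR (- (t * a)).
Proof.
move=> /andP[t_ge0 t_le1].
have := @convex_expR R (Itv01 t_ge0 t_le1) (- a) 0.
rewrite !convRE /= mulr0 addr0 expR0 mulr1 mulrN.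
rewrite /unstable.onem; lra.
Qed.

Lemma prod_oneB_le_expR (R : realType) (I : finType) (a : I -> R) :
  (forall i, a i <= 1) -> \prod_i (1 - a i) <= expR (- \sum_i a i).
Proof.
move=> a_le1; rewrite -sumrN expR_sum; apply: ler_prod => i _.
by rewrite subr_ge0 a_le1 expR_ge1Dx.
Qed.

Lemma prod_indicator (R : comPzSemiRingType) (I : finType) (b : pred I) :
  \prod_i ((b i)%:R : R) = [forall i, b i]%:R.
Proof.
have [/forallP b_all | /forallPn [i bNi]] := boolP [forall i, b i].
  by apply: big1 => i _; rewrite b_all.
by rewrite (bigD1 i) //= (negbTE bNi) mul0r.
Qed.

Lemma sum_ffun_prod_indicator (R : comPzSemiRingType) (I J : finType)
    (p : I -> J -> R) (b : I -> J -> bool) :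
  \sum_(f : {ffun I -> J}) (\prod_i p i (f i)) * [forall i, b i (f i)]%:R
    = \prod_i \sum_(j | b i j) p i j.
Proof.
transitivity (\prod_i \sum_j p i j * (b i j)%:R); last first.
  apply: eq_bigr => i _; rewrite [RHS]big_mkcond.
  by apply: eq_bigr => j _; case: (b i j); rewrite ?mulr1 ?mulr0.
rewrite (bigA_distr_bigA (fun i j => p i j * (b i j)%:R)).
by apply: eq_bigr => f _; rewrite big_split prod_indicator.
Qed.

Section SlotAllocation.
Variables (R : realType) (S V U : finType).
Variables (s : S -> R) (c : V -> R) (ik : U -> S) (T : U -> {set V}) (w : U -> R).
Variables (x : S -> V -> R) (y : U -> R) (beta : R).
Hypothesis s_gt0 : forall i, 0 < s i.
Hypothesis c_gt0 : forall j, 0 < c j.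
Hypothesis w_gt0 : forall k, 0 < w k.
Hypothesis beta_lt1 : beta < 1.
Hypothesis s_le_beta_c : forall i j, s i <= beta * c j.
Hypothesis xy_opt : lp_optimal s c ik T w x y.

Local Notation P := (Pcls s c beta).
Local Notation d := (dcls s c x beta).
Local Notation v := (vnode s c x beta).
Local Notation n := (ncls s c x beta).
Local Notation gam := (gamma beta).
Local Notation del := (delta beta).
Local Notation qbound := (qbound s c beta).
Local Notation slots := 'I_(nslots s c x beta).
Local Notation alloc := (slot_alloc s c x beta).
Local Notation p := (@slot_prob R S V s c x beta).

Lemma x_ge0 i j : 0 <= x i j.
Proof. by case: xy_opt => [[/(_ i j) /andP[]]]. Qed.

Lemma y_ge0 k : 0 <= y k.
Proof. by case: xy_opt => [[_ []]]. Qed.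

Lemma y_le_cover k : y k <= \sum_(j in T k) x (ik k) j.
Proof. by case: xy_opt => [[_ [_ []]]]. Qed.

Lemma y_le1 k : y k <= 1.
Proof. by case: xy_opt => [[_ [_ [_ []]]]]. Qed.

Lemma load_le_capacity j : \sum_i s i * x i j <= c j.
Proof.
case: xy_opt => [[_ [_ [_ [_ [cap _]]]]] _].
under eq_bigr do rewrite mulrC; exact: cap.
Qed.

Lemma delta_ge0 : 0 <= del.
Proof. exact: sqr_ge0. Qed.

Lemma gamma_gt0 : 0 < gam.
Proof. by rewrite subr_gt0 -sqrtr1 ltr_sqrt ?ltr01. Qed.

Lemma beta_gt0 (i : S) (j : V) : 0 < beta.
Proof. by rewrite -(pmulr_lgt0 _ (c_gt0 j)) (lt_le_trans (s_gt0 i)). Qed.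

Lemma gamma_lt1 (i : S) (j : V) : gam < 1.
Proof. by rewrite ltrBlDr ltrDl sqrtr_gt0 (beta_gt0 i j). Qed.

Lemma class_threshold j i : exists m, gam ^+ m * c j * beta < s i.
Proof.
have cb_gt0 : 0 < c j * beta by rewrite mulr_gt0 // (beta_gt0 i j).
have g_lt1 : `|gam| < 1 by rewrite gtr0_norm ?gamma_gt0 // (gamma_lt1 i j).
have [m gm] := exprn_lt_eventually g_lt1 (divr_gt0 (s_gt0 i) cb_gt0).
by exists m; rewrite -mulrA -ltr_pdivlMr.
Qed.

Lemma Pcls_le_threshold j i q m :
  gam ^+ m * c j * beta < s i -> P j q i -> (q <= m)%N.
Proof.
move=> gm /andP[_ s_le]; apply: leq_trans (leqSpred q) _.
rewrite -(ltr_iXn2l gamma_gt0 (gamma_lt1 i j)).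
rewrite -(ltr_pM2r (c_gt0 j)) -(ltr_pM2r (beta_gt0 i j)).
exact: lt_le_trans gm s_le.
Qed.

Lemma qbound_spec j q i : (0 < q)%N -> P j q i -> (q <= qbound)%N.
Proof.
have [m gm] := fin_all_exists (fun ji : V * S => class_threshold ji.1 ji.2).
have bound : exists M, forall j q i, (1 <= q)%N -> P j q i -> (q <= M)%N.
  exists (\max_ji m ji) => j' q' i' _ Pq.
  exact: leq_trans (Pcls_le_threshold (gm (j', i')) Pq) (leq_bigmax (j', i')).
exact: (classical_sets.xgetPex 0%N bound).
Qed.

Lemma exists_class j i : exists2 q, (0 < q <= qbound)%N & P j q i.
Proof.
have [q gq q_min] := ex_minnP (class_threshold j i).
have q_gt0 : (0 < q)%N.
  by move: gq; rewrite lt0n; apply: contraTneq => ->; rewrite mul1r mulrC -leNgt.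
have Pq : P j q i.
  rewrite /Pcls gq leNgt; apply/negP => /q_min.
  by rewrite -ltnS prednK // ltnn.
by exists q; rewrite ?q_gt0 ?(qbound_spec q_gt0 Pq).
Qed.

Lemma dcls_ge0 j q : 0 <= d j q.
Proof. by apply: sumr_ge0 => i _; apply: x_ge0. Qed.

Lemma x_le_dcls j q i : P j q i -> x i j <= d j q.
Proof.
move=> Pi; rewrite /dcls (bigD1 i) //= lerDl.
by apply: sumr_ge0 => i' _; apply: x_ge0.
Qed.

Lemma vnode_ge_delta j : 0 < \sum_i s i * x i j -> del <= v j.
Proof.
by move=> load_gt0; rewrite /vnode ler_pdivlMr // ler_wpM2l ?delta_ge0 ?load_le_capacity.
Qed.

Lemma ncls_ge j q : v j * d j q <= (n j q)%:R.
Proof. by rewrite /ncls natr_absz (le_trans (ceil_ge _)) // ler_int ler_norm. Qed.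

Lemma class_draws_ge j q i : P j q i -> del * x i j <= x i j / d j q *+ n j q.
Proof.
move=> Pi; have [x0 | xN0] := eqVneq (x i j) 0; first by rewrite x0 mulr0 mul0r mul0rn.
have x_gt0 : 0 < x i j by rewrite lt_def xN0 x_ge0.
have d_gt0 : 0 < d j q := lt_le_trans x_gt0 (x_le_dcls Pi).
have load_gt0 : 0 < \sum_i s i * x i j.
  apply: lt_le_trans (mulr_gt0 (s_gt0 i) x_gt0) _.
  rewrite (bigD1 i) //= lerDl; apply: sumr_ge0 => i' _.
  by rewrite mulr_ge0 ?x_ge0 // ltW.
rewrite -mulr_natr; apply: le_trans (_ : x i j / d j q * (v j * d j q) <= _).
  by rewrite mulrCA divfK ?gt_eqF // ler_wpM2r ?x_ge0 ?vnode_ge_delta.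
by rewrite ler_wpM2l ?divr_ge0 ?x_ge0 ?dcls_ge0 ?ncls_ge.
Qed.

Lemma dcls_slot_neq0 (sg : slots) : d (nu sg) (kappa sg) != 0.
Proof.
have : slot_label sg \in slot_list s c x beta := mem_tnth sg _.
rewrite /nu /kappa; case: (slot_label sg) => j q /flatten_mapP [j' _ /flatten_mapP [q' _]].
rewrite mem_nseq => /andP[n_gt0 /eqP-> /=].
by move: n_gt0; rewrite /ncls; apply: contraTneq => ->; rewrite mulr0 ceil0.
Qed.

Lemma slot_prob_ge0 sg i : 0 <= p sg i.
Proof. by rewrite /slot_prob; case: ifP => // _; rewrite divr_ge0 ?x_ge0 ?dcls_ge0. Qed.

Lemma slot_prob_sum sg : \sum_i p sg i = 1.
Proof. by rewrite /slot_prob -big_mkcond -mulr_suml divff ?dcls_slot_neq0. Qed.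

Lemma slot_prob_le1 sg i : p sg i <= 1.
Proof.
rewrite -(slot_prob_sum sg) (bigD1 i) //= lerDl.
by apply: sumr_ge0 => i' _; apply: slot_prob_ge0.
Qed.

Lemma alloc_prob_sum : \sum_(tau : alloc) alloc_prob tau = 1.
Proof.
rewrite /alloc_prob -bigA_distr_bigA.
by apply: big1 => sg _; apply: slot_prob_sum.
Qed.

Section User.
Variable k : U.

Let slot_hit (sg : slots) : R := (nu sg \in T k)%:R * p sg (ik k).

(* [slot_hit sg] is convertible to [label_hit (slot_label sg)]. *)
Let label_hit (l : V * nat) : R :=
  (l.1 \in T k)%:R * (if P l.1 l.2 (ik k) then x (ik k) l.1 / d l.1 l.2 else 0).

Lemma slot_prob_miss sg :
  \sum_(i | ~~ ((nu sg \in T k) && (i == ik k))) p sg i = 1 - slot_hit sg.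
Proof.
rewrite /slot_hit; case: (nu sg \in T k) => /=; last by rewrite mul0r subr0 slot_prob_sum.
by rewrite mul1r -(slot_prob_sum sg) [X in _ = X - _](bigD1 (ik k)) //= addrAC subrr add0r.
Qed.

Lemma prob_missed :
  \sum_(tau : alloc) alloc_prob tau * (~~ served ik T tau k)%:R = \prod_sg (1 - slot_hit sg).
Proof.
transitivity (\prod_sg \sum_(i | ~~ ((nu sg \in T k) && (i == ik k))) p sg i).
  by rewrite -sum_ffun_prod_indicator; apply: eq_bigr => tau _; rewrite /served negb_exists.
by apply: eq_bigr => sg _; apply: slot_prob_miss.
Qed.

Lemma prob_served :
  \sum_(tau : alloc) alloc_prob tau * (served ik T tau k)%:R = 1 - \prod_sg (1 - slot_hit sg).
Proof.
rewrite -prob_missed -[X in X - _]alloc_prob_sum -sumrB; apply: eq_bigr => tau _.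
by case: (served _ _ _ _); rewrite ?mulr1 ?mulr0 ?subr0 ?subrr.
Qed.

Lemma sum_slot_hit : \sum_sg slot_hit sg =
  \sum_(j <- enum V) \sum_(q <- iota 1 qbound | [exists i, P j q i]) label_hit (j, q) *+ n j q.
Proof.
rewrite (_ : \sum_sg slot_hit sg = \sum_(l <- slot_list s c x beta) label_hit l).
  rewrite big_flatten big_map; apply: eq_bigr => j _.
  rewrite big_flatten big_map big_filter; apply: eq_bigr => q _.
  by rewrite big_nseq iter_addr_0.
by rewrite [RHS]big_tnth.
Qed.

Lemma label_hit_ge0 l : 0 <= label_hit l.
Proof.
by rewrite mulr_ge0 //; case: ifP => // _; rewrite divr_ge0 ?x_ge0 ?dcls_ge0.
Qed.

Lemma node_hit_ge j : j \in T k ->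
  del * x (ik k) j <= \sum_(q <- iota 1 qbound | [exists i, P j q i]) label_hit (j, q) *+ n j q.
Proof.
move=> jT; have [q /andP[q_gt0 q_le] Pq] := exists_class j (ik k).
rewrite -big_filter (bigD1_seq q) /=; first last.
- by rewrite filter_uniq // iota_uniq.
- by rewrite mem_filter mem_iota q_gt0 add1n ltnS q_le !andbT; apply/existsP; exists (ik k).
apply: le_trans (_ : label_hit (j, q) *+ n j q <= _).
  by rewrite /label_hit /= jT Pq mul1r class_draws_ge.
by rewrite lerDl sumr_ge0 // => q' _; rewrite mulrn_wge0 ?label_hit_ge0.
Qed.

Lemma sum_slot_hit_ge : del * \sum_(j in T k) x (ik k) j <= \sum_sg slot_hit sg.
Proof.
rewrite sum_slot_hit big_mkcond mulr_sumr enumT; apply: ler_sum => j _.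
case: ifP => [/node_hit_ge // | _]; rewrite mulr0.
by apply: sumr_ge0 => q _; rewrite mulrn_wge0 ?label_hit_ge0.
Qed.

Lemma prob_served_ge :
  (1 - expR (- del)) * y k <= \sum_(tau : alloc) alloc_prob tau * (served ik T tau k)%:R.
Proof.
have y01 : 0 <= y k <= 1 by rewrite y_ge0 y_le1.
have hits_ge : y k * del <= \sum_sg slot_hit sg.
  by rewrite mulrC (le_trans _ sum_slot_hit_ge) // ler_wpM2l ?delta_ge0 ?y_le_cover.
rewrite prob_served mulrC (le_trans (oneBexpRN_concave _ y01)) // lerD2l lerN2.
apply: le_trans (prod_oneB_le_expR _) _; last by rewrite ler_expR lerN2.
by move=> sg; rewrite /slot_hit; case: (_ \in _); rewrite ?mul1r ?mul0r ?slot_prob_le1.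
Qed.

End User.

Lemma placement_lp_feasible (X : {ffun S -> {set V}}) : feasible_placement s c X ->
  lp_feasible s c ik T (fun i j => (j \in X i)%:R) (fun k => (T k :&: X (ik k) != set0)%:R).
Proof.
move=> /forallP load_le; split; [|split; [|split; [|split; [|split]]]].
- by move=> i j; rewrite ler0n lern1 leq_b1.
- by move=> k; rewrite ler0n.
- move=> k; case: (set0Pn (T k :&: X (ik k))) => [[j] | _]; last first.
    by rewrite sumr_ge0 // => j _; rewrite ler0n.
  rewrite inE => /andP[jT jX]; rewrite (bigD1 j) //= jX lerDl.
  by rewrite sumr_ge0 // => j' _; rewrite ler0n.
- by move=> k; rewrite lern1 leq_b1.
- by move=> j; under eq_bigr do rewrite mulrC; apply: load_le.
- move=> i j; apply: contraTeq; rewrite -leNgt pnatr_eq0 eqb0 negbK => jX.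
  apply: le_trans (load_le j); rewrite (bigD1 i) //= jX mulr1 lerDl.
  by apply: sumr_ge0 => i' _; rewrite mulr_ge0 ?ler0n // ltW.
Qed.

Lemma opt_reward_le_lp : opt_reward s c ik T w <= lp_obj w y.
Proof.
rewrite /opt_reward; elim/big_ind: _ => [| r1 r2 r1_le r2_le | X feasX].
- by apply: sumr_ge0 => k _; rewrite mulr_ge0 ?y_ge0 // ltW.
- by rewrite ge_max r1_le r2_le.
apply: le_trans (proj2 xy_opt _ _ (placement_lp_feasible feasX)).
by rewrite /placement_reward /lp_obj; under eq_bigr do rewrite mulrC.
Qed.

Lemma expected_rewardE : expected_reward s c ik T w x beta =
  \sum_k w k * \sum_(tau : alloc) alloc_prob tau * (served ik T tau k)%:R.
Proof.
rewrite /expected_reward; under eq_bigr do rewrite mulr_sumr.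
rewrite exchange_big; apply: eq_bigr => k _; rewrite mulr_sumr.
by apply: eq_bigr => tau _; rewrite mulrA mulrC.
Qed.

End SlotAllocation.

Theorem theorem5 (R : realType) (S V U : finType)
    (s : S -> R) (c : V -> R) (ik : U -> S) (T : U -> {set V}) (w : U -> R)
    (x : S -> V -> R) (y : U -> R) (beta : R) :
  (forall i, 0 < s i) ->
  (forall j, 0 < c j) ->
  (forall k, 0 < w k) ->
  beta < 1 ->
  (forall i j, s i <= beta * c j) ->
  lp_optimal s c ik T w x y ->
  (1 - expR (- delta beta)) * opt_reward s c ik T w
    <= expected_reward s c ik T w x beta.
Proof.
move=> s_gt0 c_gt0 w_gt0 beta_lt1 s_le xy_opt.
have expR_le1 : expR (- delta beta) <= 1 by rewrite -expR0 ler_expR oppr_le0 delta_ge0.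
apply: le_trans (_ : (1 - expR (- delta beta)) * lp_obj w y <= _).
  by rewrite ler_wpM2l ?subr_ge0 // (opt_reward_le_lp s_gt0 w_gt0 xy_opt).
rewrite expected_rewardE /lp_obj mulr_sumr; apply: ler_sum => k _.
rewrite [y k * w k]mulrC mulrCA ler_wpM2l ?(ltW (w_gt0 k)) //.
exact: (prob_served_ge s_gt0 c_gt0 beta_lt1 s_le xy_opt k).
Qed.
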